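(* Consider a market in which every hospital values all contracts equally, i.e. for each $h\in H$ there is $\gamma_h>0$ with $f_h(Y)=\gamma_h|Y|$ for all $Y\subseteq X_h$. For each $h$, let $\mathrm{Ch}_h$ be the choice function that, given $X'\subseteq X_h$, sorts $X'$ in non-decreasing order of wage (ties broken by a fixed order), starts with $Y=\emptyset$, goes through the sorted contracts adding each contract $x$ to $Y$ if $w_h(Y\cup\{x\})\le B_h$, and returns $Y$. Then the generalized deferred acceptance mechanism with these choice functions is strategy-proof for doctors and produces a $B_H$-stable matching.
   Context: A market consists of a finite set of doctors $D$, a finite set of hospitals $H$, a finite set of contracts $X\subseteq D\times H\times\mathbb{R}_{>0}$ (contract $x=(d,h,w)$ has doctor $x_D=d$, hospital $x_H=h$, wage $x_W=w$), strict preferences $\succ_d$ of each doctor $d$ over $X_d\cup\{\emptyset\}$, utilities $f_h$ of each hospital on subsets of $X_h$, and budgets $B_H=(B_h)_h$, $B_h>0$, with $0<x_W\le B_h$ for all $x\in X_h$. For $Y\subseteq X$: $Y_d=\{x\in Y:x_D=d\}$, $Y_h=\{x\in Y:x_H=h\}$, $w_h(Y)=\sum_{x\in Y_h}x_W$. A matching is $Y\subseteq X$ with $|Y_d|\le1$ for all $d$. A matching $Y$ is $B_H$-feasible if $w_h(Y)\le B_h$ for all $h$; a matching $Z\subseteq X_h$ blocks $Y$ if every doctor $x_D$ with $x\in Z\setminus Y$ strictly prefers $x$ to her contract in $Y$ (or to $\emptyset$), $f_h(Z)>f_h(Y_h)$ and $w_h(Z)\le B_h$; $Y$ is $B_H$-stable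 if it is $B_H$-feasible and not blocked by any $h$ and $Z\subseteq X_h$. Generalized deferred acceptance with hospital choice functions $\mathrm{Ch}_h$: let $\mathrm{Ch}_H(Y)=\bigcup_h\mathrm{Ch}_h(Y_h)$; $\mathrm{Ch}_d(Y)=\{x\}$ for the $\succ_d$-best $x\in Y_d$ if $x\succ_d\emptyset$, else $\emptyset$; $\mathrm{Ch}_D(Y)=\bigcup_d\mathrm{Ch}_d(Y_d)$. Set $R^{(0)}=\emptyset$; for $i=1,2,\dots$: $Y^{(i)}=\mathrm{Ch}_D(X\setminus R^{(i-1)})$, $Z^{(i)}=\mathrm{Ch}_H(Y^{(i)})$, $R^{(i)}=R^{(i-1)}\cup(Y^{(i)}\setminus Z^{(i)})$; if $Y^{(i)}=Z^{(i)}$, output $Y^{(i)}$. This is a mechanism mapping reported doctor preference profiles to matchings; it is strategy-proof for doctors if for every doctor $d$, every profile $\succ_D$ and every alternative report $\succ'_d$, the outcome of $d$ under $\succ_D$ is weakly $\succ_d$-preferred to her outcome under $(\succ'_d,\succ_{-d})$. *)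

From HB Require Import structures.
From mathcomp Require Import all_boot all_order all_algebra.
Set Implicit Arguments. Unset Strict Implicit. Unset Printing Implicit Defensive.
Import Order.TTheory GRing.Theory Num.Theory.
Local Open Scope ring_scope.

(* A market: doctors D, hospitals H, contracts C (a finite type; the set X of
   the paper is all of C).  A doctor preference is a rank function  option C -> nat
   (None = the outside option "emptyset"); lower rank = more preferred. *)

Section Market.
Variables (R : realFieldType) (D H C : finType).
Variables (cD : C -> D) (cH : C -> H) (cW : C -> R).

Definition of_doc (Y : {set C}) (d : D) : {set C} := [set x in Y | cD x == d].
Definition of_hosp (Y : {set C}) (h : H) : {set C} := [set x in Y | cH x == h].

Definition wage_h (h : H) (Y : {set C}) : R := \sum_(x in Y | cH x == h) cW x.

Definition strict_pref (d : D) (p : option C -> nat) : Prop :=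
  {in [pred o : option C | if o is Some x then cD x == d else true] &, injective p}.

Definition is_matching (Y : {set C}) : Prop := forall d, (#|of_doc Y d| <= 1)%N.

Definition outcome (Y : {set C}) (d : D) : option C := [pick x in Y | cD x == d].

Variables (B : H -> R) (tb : C -> nat).

Definition wage_le (x y : C) : bool :=
  (cW x < cW y) || ((cW x == cW y) && (tb x <= tb y)%N).

Definition Ch_h (h : H) (X' : {set C}) : {set C} :=
  foldl (fun Y x => if wage_h h (x |: Y) <= B h then x |: Y else Y)
        set0 (sort wage_le (enum X')).

Definition Ch_H (Y : {set C}) : {set C} := \bigcup_(h : H) Ch_h h (of_hosp Y h).

Definition Ch_D (P : D -> option C -> nat) (Y : {set C}) : {set C} :=
  [set x in Y | (P (cD x) (Some x) < P (cD x) None)%N &&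
     [forall y in Y, (cD y == cD x) ==> (P (cD x) (Some x) <= P (cD x) (Some y))%N]].

(* with R^(i-1) = Rseq P (i-1):  Y^(i) = Ystep P (Rseq P (i-1)),
   Z^(i) = Zstep P (Rseq P (i-1)). *)
Definition Ystep P (Rj : {set C}) : {set C} := Ch_D P (~: Rj).
Definition Zstep P (Rj : {set C}) : {set C} := Ch_H (Ystep P Rj).

Fixpoint Rseq P (i : nat) : {set C} :=
  match i with
  | 0 => set0
  | i'.+1 => Rseq P i' :|: (Ystep P (Rseq P i') :\: Zstep P (Rseq P i'))
  end.

Definition DA_outputs P (M : {set C}) : Prop :=
  exists i : nat,
    [/\ Ystep P (Rseq P i) = Zstep P (Rseq P i),
        (forall j, (j < i)%N -> Ystep P (Rseq P j) <> Zstep P (Rseq P j)) &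
        M = Ystep P (Rseq P i)].

Definition feasible (Y : {set C}) : Prop :=
  is_matching Y /\ forall h, wage_h h Y <= B h.

Definition blocks (P : D -> option C -> nat) (f : H -> {set C} -> R)
  (Y : {set C}) (h : H) (Z : {set C}) : Prop :=
  [/\ (forall x, x \in Z -> cH x = h), is_matching Z,
      (forall x, x \in Z :\: Y ->
         (P (cD x) (Some x) < P (cD x) (outcome Y (cD x)))%N),
      f h Z > f h (of_hosp Y h) & wage_h h Z <= B h].

Definition stable P f (Y : {set C}) : Prop :=
  feasible Y /\ ~ (exists h Z, blocks P f Y h Z).

End Market.

Definition update (D : eqType) (T : Type) (P : D -> T) (d : D) (p' : T) : D -> T :=
  fun d0 => if d0 == d then p' else P d0.

(* The greedy choice function keeps, at each hospital, the longest prefix of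
   the offered contracts (in the wage order) that fits in the budget.  Such a
   choice function is substitutable, ignores rejected contracts, and obeys the
   law of aggregate demand: enlarging the offer set can only lower the i-th
   cheapest wage, so at least as many contracts fit.  The classical theory of
   matching with contracts then applies: deferred acceptance ends at a
   matching that is stable for the choice functions, every doctor weakly
   prefers it to any such stable matching, and by the law of aggregate demand
   all these matchings match the same doctors.  As f_h counts contracts, an
   affordable blocking set Z at h would be chosen entirely from itself, while
   from mu_h together with Z only mu_h is chosen; aggregate demand gives
   |Z| <= |mu_h|, so the outcome is B_H-stable.
   For strategy-proofness, suppose a misreport gets d a contract x' that she
   truly prefers, and truncate d's true list just below x'.  If deferred
   acceptance under the truncation matches d, its outcome is stable for the
   true profile, so by doctor-optimality d's truthful outcome is at least as
   good as x'.  Otherwise that outcome is stable for the profile in which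
   d ranks x' first; so is the misreport outcome, hence deferred acceptance
   under that profile gives d the contract x', although it must leave d
   unmatched like every other stable matching. *)

From HB Require Import structures.
From mathcomp Require Import all_boot all_order all_algebra.
From mathcomp Require Import lra zify.
Set Implicit Arguments. Unset Strict Implicit. Unset Printing Implicit Defensive.
Import Order.TTheory GRing.Theory Num.Theory.
Local Open Scope ring_scope.

Lemma ler_sum_subpred (R : numDomainType) (T : finType) (F : T -> R) (P Q : pred T) :
  (forall i, 0 <= F i) -> subpred P Q -> \sum_(i | P i) F i <= \sum_(i | Q i) F i.
Proof.
move=> F_ge0 PQ; rewrite [leLHS]big_mkcond [leRHS]big_mkcond /=.
apply: ler_sum => i _; case Pi: (P i); first by rewrite PQ.
by case: (Q i).
Qed.

Lemma card_le_by_weight (R : numDomainType) (T : finType) (w : T -> R) (c : R)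
    (U V : {set T}) :
  0 < c -> {in U, forall u, c <= w u} -> {in V, forall v, w v <= c} ->
  \sum_(u in U) w u < c + \sum_(v in V) w v -> (#|U| <= #|V|)%N.
Proof.
move=> c_gt0 cU Vc lt_sum; rewrite -ltnS -(ltr_pMn2l c_gt0).
have le_U : c *+ #|U| <= \sum_(u in U) w u by rewrite -sumr_const; apply: ler_sum.
have le_V : \sum_(v in V) w v <= c *+ #|V| by rewrite -sumr_const; apply: ler_sum.
by rewrite mulrS (le_lt_trans le_U) // (lt_le_trans lt_sum) // lerD2l.
Qed.

Lemma card_fibres (T I : finType) (f : T -> I) (A : {set T}) :
  #|A| = (\sum_i #|[set x in A | f x == i]|)%N.
Proof.
rewrite -sum1_card (partition_big f predT) //; apply: eq_bigr => i _.
by rewrite -sum1_card; apply: eq_bigl => x; rewrite inE.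
Qed.

Section BudgetedMarket.
Variables (R : realFieldType) (D H C : finType).
Variables (cD : C -> D) (cH : C -> H) (cW : C -> R) (B : H -> R) (tb : C -> nat).
Hypothesis cW_gt0 : forall x, 0 < cW x.
Hypothesis B_ge0 : forall h, 0 <= B h.
Hypothesis tb_inj : injective tb.

Local Notation le := (wage_le cW tb).
Local Notation wage := (wage_h cH cW).
Local Notation Ch := (Ch_H cH cW B tb).

(** * The greedy choice function *)

Lemma wage_le_refl : reflexive le.
Proof. by move=> x; rewrite /wage_le eqxx leqnn orbT. Qed.

Lemma wage_le_trans : transitive le.
Proof.
move=> y x z; rewrite /wage_le.
case/orP=> [lt_xy | /andP[/eqP -> le_xy]] /orP[lt_yz | /andP[/eqP <- le_yz]].
- by rewrite (lt_trans lt_xy lt_yz).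
- by rewrite lt_xy.
- by rewrite lt_yz.
- by rewrite eqxx (leq_trans le_xy le_yz) orbT.
Qed.

Lemma wage_le_total : total le.
Proof.
move=> x y; rewrite /wage_le.
by case: (ltrgtP (cW x) (cW y)) => //= _; apply: leq_total.
Qed.

Lemma wage_le_anti x y : le x y -> le y x -> x = y.
Proof.
rewrite /wage_le; case: (ltrgtP (cW x) (cW y)) => //= _ le_xy le_yx.
by apply: tb_inj; apply/eqP; rewrite eqn_leq le_xy le_yx.
Qed.

Lemma wage_le_cW x y : le x y -> cW x <= cW y.
Proof. by case/orP=> [/ltW // | /andP[/eqP -> _]]. Qed.

Lemma wage_le_min (P : pred C) z : P z -> exists2 m, P m & forall y, P y -> le m y.
Proof.
move=> Pz; have [m Pm min_m] :=
  @extremumP _ _ le z P id wage_le_refl wage_le_trans wage_le_total Pz.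
by exists m.
Qed.

Lemma cW_ge0 x : 0 <= cW x.
Proof. exact: ltW. Qed.

Lemma wage_h_setU1 h (Y : {set C}) x : x \notin Y ->
  wage h (x |: Y) = (if cH x == h then cW x else 0) + wage h Y.
Proof. by move=> xY; rewrite /wage_h !big_mkcondr big_setU1. Qed.

Lemma wage_h_of_hosp h (Y : {set C}) : wage h Y = \sum_(x in of_hosp cH Y h) cW x.
Proof. by apply: eq_bigl => x; rewrite inE. Qed.

Lemma wage_h_set0 h : wage h set0 = 0.
Proof. by rewrite /wage_h big_pred0 // => x; rewrite inE. Qed.

Definition wage_prefix h (s : seq C) z := \sum_(y <- s | (cH y == h) && le y z) cW y.

Lemma wage_prefix_head h x s : uniq (x :: s) -> sorted le (x :: s) ->
  wage_prefix h s x = 0.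
Proof.
move=> /andP[xs _] /(order_path_min wage_le_trans) /allP le_x.
rewrite /wage_prefix big_seq_cond big1 // => y /andP[ys /andP[_ le_yx]].
by move: xs; rewrite -(wage_le_anti le_yx (le_x y ys)) ys.
Qed.

Lemma wage_prefix_ge h s z : z \in s -> cH z = h -> cW z <= wage_prefix h s z.
Proof.
move=> zs hz; rewrite /wage_prefix (big_rem z zs) /= hz eqxx wage_le_refl.
by rewrite lerDl sumr_ge0 // => y _; apply: cW_ge0.
Qed.

Lemma wage_prefix_cons h x s z : le x z ->
  wage_prefix h (x :: s) z = (if cH x == h then cW x else 0) + wage_prefix h s z.
Proof.
by move=> le_xz; rewrite /wage_prefix big_cons le_xz andbT; case: (cH x == h); rewrite ?add0r.
Qed.

Lemma foldl_greedy_mem h (s : seq C) (Y0 : {set C}) :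
  uniq s -> sorted le s -> {in s, forall x, x \notin Y0} -> wage h Y0 <= B h ->
  forall z, (z \in foldl (fun Y x => if wage h (x |: Y) <= B h then x |: Y else Y) Y0 s) =
    (z \in Y0) || [&& z \in s & (cH z != h) || (wage h Y0 + wage_prefix h s z <= B h)].
Proof.
elim: s Y0 => [|x s IH] Y0 /=; first by move=> *; rewrite orbF.
move=> us srt notY0 wY0 z.
have [xs us'] := andP us; have srt' := path_sorted srt.
have le_x : {in s, forall y, le x y} := allP (order_path_min wage_le_trans srt).
have xY0 := notY0 x (mem_head x s).
have notY0s : {in s, forall y, y \notin Y0}.
  by move=> y ys; apply: notY0; rewrite in_cons ys orbT.
have prefix_x := wage_prefix_head h us srt.
rewrite in_cons wage_h_setU1 //; case: ifP => [accept | reject].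
  have notY0' : {in s, forall y, y \notin x |: Y0}.
    move=> y ys; rewrite in_setU1 negb_or notY0s // andbT.
    by apply: contraNneq xs => <-.
  rewrite IH ?wage_h_setU1 // in_setU1.
  have [-> | nzx] := eqVneq z x.
    by rewrite /= wage_prefix_cons ?wage_le_refl // prefix_x addr0 addrC accept !orbT.
  rewrite /=; case: (z \in Y0) => //=; case zs: (z \in s) => //=.
  by rewrite wage_prefix_cons ?le_x // addrA [wage h Y0 + _]addrC.
have hx : cH x == h by apply: contraFT reject => /negbTE ->; rewrite add0r.
rewrite hx in reject; move/negbT: reject; rewrite -ltNge => over.
rewrite IH //.
have [-> | nzx] := eqVneq z x.
  rewrite (negbTE xY0) (negbTE xs) wage_prefix_cons ?wage_le_refl // prefix_x hx /=.
  by rewrite addr0 addrC leNgt over.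
rewrite /=; case: (z \in Y0) => //=; case zs: (z \in s) => //=.
case: (eqVneq (cH z) h) => //= hz.
(* z is at least as dear as the rejected x, so it overshoots the budget too. *)
rewrite wage_prefix_cons ?le_x // hx.
have le_xz := wage_le_cW (le_x z zs).
have ge_z := wage_prefix_ge zs hz.
by apply/idP/idP => ?; lra.
Qed.

Definition wage_upto h (X : {set C}) z := \sum_(y in X | (cH y == h) && le y z) cW y.

Lemma Ch_h_mem h (X : {set C}) z : (z \in Ch_h cH cW B tb h X) =
  (z \in X) && ((cH z != h) || (wage_upto h X z <= B h)).
Proof.
rewrite /Ch_h foldl_greedy_mem ?sort_uniq ?enum_uniq ?wage_h_set0 //.
- rewrite inE /= mem_sort mem_enum add0r /wage_prefix.
  by rewrite (perm_big _ (permEl (perm_sort _ _))) big_enum_cond.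
- exact: sort_sorted wage_le_total _.
- by move=> x; rewrite inE.
Qed.

Lemma wage_upto_of_hosp h (Y : {set C}) z : wage_upto h (of_hosp cH Y h) z = wage_upto h Y z.
Proof. by apply: eq_bigl => y; rewrite !inE; case: (cH y == h); rewrite ?andbT ?andbF. Qed.

Lemma Ch_H_mem (Y : {set C}) z : (z \in Ch Y) = (z \in Y) && (wage_upto (cH z) Y z <= B (cH z)).
Proof.
apply/bigcupP/andP => [[h _] | [zY ok]]; last first.
  by exists (cH z) => //; rewrite Ch_h_mem !inE zY eqxx /= wage_upto_of_hosp ok.
rewrite Ch_h_mem !inE => /andP[/andP[zY /eqP <-]].
by rewrite eqxx /= wage_upto_of_hosp.
Qed.

Lemma wage_Ch_H h (Y : {set C}) : wage h (Ch Y) <= B h.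
Proof.
have -> : wage h (Ch Y) = wage h (Ch_h cH cW B tb h (of_hosp cH Y h)).
  apply: eq_bigl => z; rewrite Ch_H_mem Ch_h_mem !inE wage_upto_of_hosp.
  by case: (cH z =P h) => [<- | _]; rewrite ?andbT ?andbF // eqxx.
rewrite /Ch_h; set step := (fun Y x => _).
have step_fits s Y0 : wage h Y0 <= B h -> wage h (foldl step Y0 s) <= B h.
  by elim: s Y0 => //= x s IH Y0 fits; apply: IH; rewrite /step; case: ifP.
by apply: step_fits; rewrite wage_h_set0.
Qed.

Lemma Ch_H_sub (X : {set C}) : Ch X \subset X.
Proof. by apply/subsetP => z; rewrite Ch_H_mem => /andP[]. Qed.

Lemma wage_upto_subset h (X X' : {set C}) z : X \subset X' -> wage_upto h X z <= wage_upto h X' z.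
Proof.
by move=> /subsetP sXX'; apply: ler_sum_subpred cW_ge0 _ => v /andP[/sXX' -> ->].
Qed.

Lemma wage_upto_le_point h (X : {set C}) y z : le y z -> wage_upto h X y <= wage_upto h X z.
Proof.
move=> le_yz; apply: ler_sum_subpred cW_ge0 _ => v /and3P[-> -> le_vy] /=.
exact: wage_le_trans le_vy le_yz.
Qed.

Lemma Ch_H_substitutes (X X' : {set C}) z : X \subset X' -> z \in X -> z \in Ch X' -> z \in Ch X.
Proof.
rewrite !Ch_H_mem => sXX' -> /andP[_]; apply: le_trans; exact: wage_upto_subset.
Qed.

Lemma Ch_H_below_rejected (X : {set C}) v m :
  v \in Ch X -> m \in X :\: Ch X -> cH v = cH m -> le v m.
Proof.
move=> vCh /setDP[mX mNCh] hvm; have [// | le_mv] := orP (wage_le_total v m).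
case/negP: mNCh; rewrite Ch_H_mem mX -hvm /=.
apply: le_trans (wage_upto_le_point _ _ le_mv) _.
by move: vCh; rewrite Ch_H_mem => /andP[].
Qed.

Lemma wage_upto_ge h (X S : {set C}) z : z \in X -> cH z = h -> z \notin S -> S \subset X ->
  {in S, forall v, cH v = h -> le v z} -> cW z + wage h S <= wage_upto h X z.
Proof.
move=> zX hz zNS /subsetP sSX le_z.
rewrite /wage_upto (bigD1 z) /=; last by rewrite zX hz eqxx wage_le_refl.
rewrite lerD2l; apply: ler_sum_subpred cW_ge0 _ => v /andP[vS /eqP hv].
rewrite sSX //= hv eqxx le_z //=; by apply: contraNneq zNS => <-.
Qed.

Lemma wage_upto_min_rejected h (X : {set C}) m : m \in X -> cH m = h ->
  (forall v, v \in X -> v \notin Ch X -> cH v = h -> le m v) ->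
  wage_upto h X m <= cW m + wage h (Ch X).
Proof.
move=> mX hm min_m; rewrite /wage_upto (bigD1 m) /=; last by rewrite mX hm eqxx wage_le_refl.
rewrite lerD2l; apply: ler_sum_subpred cW_ge0 _ => v /andP[/and3P[vX /eqP hv le_vm] nvm].
rewrite hv eqxx andbT; apply: contraNT nvm => vNCh.
by rewrite (wage_le_anti le_vm (min_m v vX vNCh hv)).
Qed.

Lemma Ch_H_irrelevance (X X' : {set C}) : Ch X \subset X' -> X' \subset X -> Ch X' = Ch X.
Proof.
move=> sChX' sX'X; apply/setP => z; apply/idP/idP => [zCh' | zCh]; last first.
  rewrite Ch_H_mem (subsetP sChX') //=.
  by move: zCh; rewrite Ch_H_mem => /andP[_]; apply: le_trans; apply: wage_upto_subset.
apply: contraT => zNCh; have zX' := subsetP (Ch_H_sub X') z zCh'.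
pose rejected := [pred v | (v \in X) && (v \notin Ch X) && (cH v == cH z)].
have rej_z : rejected z by rewrite /= (subsetP sX'X) // zNCh eqxx.
have [m /andP[/andP[mX mNCh] /eqP hm] min_m] := wage_le_min rej_z.
have over : B (cH z) < wage_upto (cH z) X m.
  by move: mNCh; rewrite Ch_H_mem mX hm /= -ltNge.
have fits : wage_upto (cH z) X' z <= B (cH z) by move: zCh'; rewrite Ch_H_mem => /andP[].
suff : wage_upto (cH z) X m <= wage_upto (cH z) X' z.
  by move=> le_mz; have := lt_le_trans over (le_trans le_mz fits); rewrite ltxx.
apply: le_trans (wage_upto_min_rejected mX hm _) _.
  by move=> v vX vNCh hv; apply: min_m; rewrite /= vX vNCh hv eqxx.
apply: le_trans (wage_upto_ge zX' _ zNCh sChX' _) => //.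
  by rewrite lerD2r wage_le_cW ?min_m.
move=> v vCh hv; apply: wage_le_trans (min_m z rej_z).
by apply: Ch_H_below_rejected vCh _ _; rewrite ?inE ?mX ?mNCh ?hm.
Qed.

Lemma Ch_H_affordable h (Z : {set C}) : {in Z, forall x, cH x = h} -> wage h Z <= B h -> Ch Z = Z.
Proof.
move=> hZ fits; apply/setP => z; rewrite Ch_H_mem; case zZ: (z \in Z) => //=.
rewrite (hZ z zZ); apply: le_trans fits.
by apply: ler_sum_subpred cW_ge0 _ => v /and3P[-> -> _].
Qed.

Lemma card_Ch_H_hosp_mono h (X X' : {set C}) : X \subset X' ->
  (#|of_hosp cH (Ch X) h| <= #|of_hosp cH (Ch X') h|)%N.
Proof.
move=> sXX'; set A := of_hosp cH (Ch X) h; set A' := of_hosp cH (Ch X') h.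
have [sAA' | /subsetPn[u uA uNA']] := boolP (A \subset A'); first exact: subset_leq_card.
have [uCh /eqP hu] := setIdP uA.
pose rejected := [pred v | (v \in X') && (v \notin Ch X') && (cH v == h)].
have rej_u : rejected u.
  rewrite /= (subsetP sXX') ?(subsetP (Ch_H_sub X)) // hu eqxx andbT.
  by move: uNA'; rewrite inE hu eqxx andbT.
have [r /andP[/andP[rX' rNCh'] /eqP hr] min_r] := wage_le_min rej_u.
(* r is the cheapest contract rejected from X': what X' keeps is cheaper than r,
   A \ A' is dearer, A fits in the budget and A' together with r does not. *)
have over : B h < cW r + \sum_(v in A') cW v.
  rewrite -wage_h_of_hosp; apply: lt_le_trans (wage_upto_min_rejected rX' hr _).
    by move: rNCh'; rewrite Ch_H_mem rX' hr /= -ltNge.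
  by move=> v vX' vNCh' hv; apply: min_r; rewrite /= vX' vNCh' hv eqxx.
have fits : \sum_(v in A) cW v <= B h by rewrite -wage_h_of_hosp wage_Ch_H.
rewrite (big_setID A') /= in fits; rewrite (big_setID A) /= setIC in over.
rewrite -(cardsID A' A) -(cardsID A A') setIC leq_add2l.
apply: (card_le_by_weight (c := cW r)) => //; last by lra.
- move=> v /setDP[/setIdP[vCh hv] vNA']; apply/wage_le_cW/min_r.
  rewrite /= (subsetP sXX') ?(subsetP (Ch_H_sub X)) // hv andbT.
  by move: vNA'; rewrite inE hv andbT.
- move=> v /setDP[/setIdP[vCh' /eqP hv] _]; apply/wage_le_cW/(Ch_H_below_rejected vCh').
    by rewrite inE rNCh' rX'.
  by rewrite hv hr.
Qed.

Lemma Ch_H_rejected_persist r (A A' : {set C}) :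
  Ch A \subset A' -> r \notin Ch (r |: A) -> r \notin Ch (r |: A').
Proof.
move=> sChA rNCh; set T := r |: (A :|: A').
have sAT : r |: A \subset T by rewrite setUS ?subsetUl.
have sA'T : r |: A' \subset T by rewrite setUS ?subsetUr.
have sChT : Ch T \subset r |: A'.
  apply/subsetP => z zCh; have := subsetP (Ch_H_sub T) z zCh.
  rewrite !in_setU1 in_setU => /or3P[-> | zA | ->]; rewrite ?orbT //.
  rewrite (subsetP sChA) ?orbT //; apply: Ch_H_substitutes zA zCh.
  by apply/subsetP => v vA; rewrite !inE vA orbT.
rewrite (Ch_H_irrelevance sChT sA'T); apply: contra rNCh.
exact: Ch_H_substitutes sAT (setU11 r A).
Qed.

Lemma card_Ch_H_mono (X X' : {set C}) : X \subset X' -> (#|Ch X| <= #|Ch X'|)%N.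
Proof.
move=> sXX'; rewrite (card_fibres cH (Ch X)) (card_fibres cH (Ch X')).
by apply: leq_sum => h _; apply: card_Ch_H_hosp_mono.
Qed.

(** * Stability with respect to the choice functions *)

Definition acceptable (P : D -> option C -> nat) x := (P (cD x) (Some x) < P (cD x) None)%N.

Definition prefers (P : D -> option C -> nat) (mu : {set C}) y :=
  (P (cD y) (Some y) < P (cD y) (outcome cD mu (cD y)))%N.

(* Since Ch_H is substitutable, blocking sets can be taken to be singletons. *)
Definition choice_stable P (mu : {set C}) :=
  [/\ is_matching cD mu, forall x, x \in mu -> acceptable P x, Ch mu = mu &
      forall y, y \notin mu -> prefers P mu y -> y \notin Ch (y |: mu)].

Lemma outcome_some (Y : {set C}) d m : outcome cD Y d = Some m -> m \in Y /\ cD m = d.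
Proof. by rewrite /outcome; case: pickP => // y /andP[yY /eqP <-] [<-]. Qed.

Lemma outcome_none (Y : {set C}) d m : outcome cD Y d = None -> m \in Y -> cD m != d.
Proof. by rewrite /outcome; case: pickP => // noY _ mY; move: (noY m); rewrite mY /= => ->. Qed.

Lemma outcome_of_mem (Y : {set C}) m : is_matching cD Y -> m \in Y -> outcome cD Y (cD m) = Some m.
Proof.
move=> matchY mY; rewrite /outcome; case: pickP => [y /andP[yY /eqP ym] | noY]; last first.
  by move: (noY m); rewrite mY eqxx.
have /card_le1_eqP eq_in := matchY (cD m).
by congr Some; apply: eq_in; rewrite !inE ?yY ?mY ?ym ?eqxx.
Qed.

Lemma outcome_none_imset (Y : {set C}) d : (outcome cD Y d == None) = (d \notin cD @: Y).
Proof.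
rewrite /outcome; case: pickP => [y /andP[yY /eqP <-] | noY]; first by rewrite imset_f.
by apply/esym/imsetP => -[m mY md]; move: (noY m); rewrite mY md eqxx.
Qed.

Lemma Ch_D_mem P (S : {set C}) x : x \in Ch_D cD P S ->
  [/\ x \in S, acceptable P x &
      forall y, y \in S -> cD y = cD x -> (P (cD x) (Some x) <= P (cD x) (Some y))%N].
Proof.
rewrite inE => /and3P[xS acc /forallP best]; split => // y yS yx.
by move: (best y); rewrite yS yx eqxx.
Qed.

Lemma mem_Ch_D P (S : {set C}) x : x \in S -> acceptable P x ->
  (forall y, y \in S -> cD y = cD x -> (P (cD x) (Some x) <= P (cD x) (Some y))%N) ->
  x \in Ch_D cD P S.
Proof.
move=> xS acc best; rewrite inE xS; apply/and3P; split => //; apply/forallP => y.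
by apply/implyP => yS; apply/implyP => /eqP; apply: best.
Qed.

Lemma Ch_D_best P (S : {set C}) x : x \in S -> acceptable P x ->
  exists2 m, m \in Ch_D cD P S & cD m = cD x /\ (P (cD x) (Some m) <= P (cD x) (Some x))%N.
Proof.
move=> xS acc; pose offers := [pred m | (m \in S) && (cD m == cD x)].
have offer_x : offers x by rewrite /= xS eqxx.
case: (arg_minnP (fun m => P (cD x) (Some m)) offer_x) => m /andP[mS /eqP mx] min_m.
exists m; last by split; rewrite ?min_m.
apply: mem_Ch_D => // [|y yS ym]; rewrite /acceptable mx.
  by apply: leq_ltn_trans acc; apply: min_m.
by apply: min_m; rewrite /= yS ym mx eqxx.
Qed.

Lemma matching_inj (Y : {set C}) : is_matching cD Y -> {in Y &, injective cD}.
Proof.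
move=> matchY x y xY yY xy; apply: Some_inj.
by rewrite -(outcome_of_mem matchY xY) xy outcome_of_mem.
Qed.

Lemma Ch_H_stable_union P mu (Y : {set C}) : choice_stable P mu ->
  (forall y, y \in Y -> y \notin mu -> prefers P mu y) -> Ch (mu :|: Y) = mu.
Proof.
case=> _ _ Ch_mu blocked pref.
have sChmu : Ch (mu :|: Y) \subset mu.
  apply/subsetP => z zCh; apply: contraT => zNmu.
  have zY : z \in Y by move: (subsetP (Ch_H_sub _) z zCh); rewrite in_setU (negbTE zNmu).
  case/negP: (blocked z zNmu (pref z zY zNmu)).
  apply: Ch_H_substitutes (setU11 z mu) zCh.
  by rewrite subUset sub1set in_setU zY orbT subsetUl.
by rewrite -{2}Ch_mu (Ch_H_irrelevance sChmu (subsetUl mu Y)).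
Qed.

Lemma choice_stable_transfer P Q mu : choice_stable P mu ->
  (forall x, x \in mu -> acceptable Q x) ->
  (forall y, y \notin mu -> prefers Q mu y -> prefers P mu y) -> choice_stable Q mu.
Proof.
case=> match_mu _ Ch_mu blocked accQ prefQ; split=> // y yNmu pref.
exact/blocked/prefQ.
Qed.

Lemma card_preferred_le_stable P mu h (Z : {set C}) : choice_stable P mu ->
  {in Z, forall x, cH x = h} -> wage h Z <= B h ->
  (forall y, y \in Z -> y \notin mu -> prefers P mu y) ->
  (#|Z| <= #|of_hosp cH mu h|)%N.
Proof.
move=> stab hZ fits pref.
have Z_hosp : of_hosp cH Z h = Z.
  by apply/setP => z; rewrite inE; case zZ: (z \in Z); rewrite /= ?(hZ z zZ) ?eqxx.
rewrite -{1}Z_hosp -{1}(Ch_H_affordable hZ fits) -(Ch_H_stable_union stab pref).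
exact/card_Ch_H_hosp_mono/subsetUr.
Qed.

Lemma stable_of_choice_stable P (f : H -> {set C} -> R) (gamma : H -> R) mu :
  (forall h, 0 < gamma h) ->
  (forall h (Y : {set C}), (forall x, x \in Y -> cH x = h) -> f h Y = gamma h * #|Y|%:R) ->
  choice_stable P mu -> stable cD cH cW B P f mu.
Proof.
move=> gamma_gt0 f_card stab; have [match_mu _ Ch_mu _] := stab.
split; first by split=> // h; rewrite -Ch_mu wage_Ch_H.
case=> h [Z [hZ _ pref gain fits]].
have pref' y : y \in Z -> y \notin mu -> prefers P mu y.
  by move=> yZ yNmu; apply: pref; rewrite inE yNmu yZ.
have := card_preferred_le_stable stab hZ fits pref'.
rewrite leqNgt => /negP; apply; move: gain.
rewrite (f_card h Z hZ) (f_card h (of_hosp cH mu h)) ?ltr_pM2l // ?ltr_nat //.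
by move=> x; rewrite inE => /andP[_ /eqP].
Qed.

(** * Deferred acceptance *)

Section DeferredAcceptance.
Variable P : D -> option C -> nat.
Hypothesis P_strict : forall d, strict_pref cD d (P d).

Lemma strict_pref_Some d y z :
  cD y = d -> cD z = d -> P d (Some y) = P d (Some z) -> y = z.
Proof.
move=> yd zd; have := @P_strict d (Some y) (Some z).
by rewrite !inE /= yd zd eqxx => /(_ isT isT) inj /inj [].
Qed.

Lemma Ch_D_matching (S : {set C}) : is_matching cD (Ch_D cD P S).
Proof.
move=> d; apply/card_le1_eqP => x y /setIdP[xCh /eqP xd] /setIdP[yCh /eqP yd].
have [xS _ best_x] := Ch_D_mem xCh; have [yS _ best_y] := Ch_D_mem yCh.
have le_yx := best_y x xS (etrans xd (esym yd)); rewrite yd in le_yx.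
have le_xy := best_x y yS (etrans yd (esym xd)); rewrite xd in le_xy.
by apply: (strict_pref_Some yd xd); apply/eqP; rewrite eqn_leq le_yx le_xy.
Qed.

Local Notation Rs := (Rseq cD cH cW B tb P).
Local Notation Ys k := (Ystep cD P (Rs k)).
Local Notation Zs k := (Zstep cD cH cW B tb P (Rs k)).

Lemma Rseq_succ k : Rs k.+1 = Rs k :|: (Ys k :\: Zs k).
Proof. by []. Qed.

Lemma Ystep_notin_Rseq k x : x \in Ys k -> x \notin Rs k.
Proof. by case/Ch_D_mem; rewrite inE. Qed.

Lemma Zstep_sub_Ystep k : Zs k \subset Ys k.
Proof. exact: Ch_H_sub. Qed.

Lemma Zstep_sub_Ystep_succ k : Zs k \subset Ys k.+1.
Proof.
apply/subsetP => x xZ; have [xNR acc best] := Ch_D_mem (subsetP (Zstep_sub_Ystep k) x xZ).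
apply: mem_Ch_D => // [|y]; first by rewrite Rseq_succ !inE negb_or -in_setC xNR xZ.
by rewrite Rseq_succ !inE negb_or => /andP[yNR _]; apply: best; rewrite inE.
Qed.

Lemma Rseq_rejected k r : r \in Rs k -> r \notin Ch (r |: Ys k).
Proof.
elim: k => [|k IH]; first by rewrite inE.
rewrite Rseq_succ in_setU => /orP[/IH | /setDP[rY rNZ]].
  exact: Ch_H_rejected_persist (Zstep_sub_Ystep_succ k).
apply: Ch_H_rejected_persist (Zstep_sub_Ystep_succ k) _.
by have /setUidPr -> : [set r] \subset Ys k by rewrite sub1set.
Qed.

Lemma preferred_in_Rseq n y : y \notin Ys n -> prefers P (Ys n) y -> y \in Rs n.
Proof.
move=> yNY pref; apply: contraT => yNR; have yS : y \in ~: Rs n by rewrite inE.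
move: pref; rewrite /prefers; case out: (outcome cD (Ys n) (cD y)) => [m|] pref.
  have [mY md] := outcome_some out; have [_ _ best] := Ch_D_mem mY.
  by move: (best y yS (esym md)); rewrite md leqNgt pref.
have [m mY [md _]] := Ch_D_best yS pref.
by move: (outcome_none out mY); rewrite md eqxx.
Qed.

Lemma Rseq_card_grows k : Ys k != Zs k -> (#|Rs k| < #|Rs k.+1|)%N.
Proof.
move=> neq; rewrite Rseq_succ; apply/proper_card/properUl/subsetPn.
have /subsetPn[x xY xNZ] : ~~ (Ys k \subset Zs k).
  by apply: contra neq => sYZ; rewrite eqEsubset sYZ Zstep_sub_Ystep.
by exists x; [rewrite in_setD xY xNZ | exact: Ystep_notin_Rseq].
Qed.

Lemma DA_terminates : exists n, Ys n = Zs n.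
Proof.
have [/existsP[n /eqP] | /existsPn neq] := boolP [exists n : 'I_#|C|.+2, Ys n == Zs n].
  by exists n.
have grows n : (n < #|C|.+2)%N -> (n <= #|Rs n|)%N.
  elim: n => // n IH lt_n; apply: leq_ltn_trans (IH (ltnW lt_n)) _.
  exact: Rseq_card_grows (neq (Ordinal (ltnW lt_n))).
by have := leq_trans (grows _ (ltnSn _)) (max_card (Rs #|C|.+1)); rewrite ltnn.
Qed.

Lemma DA_outputs_exists : exists M, DA_outputs cD cH cW B tb P M.
Proof.
have fixed : exists n, Ys n == Zs n by have [n fix_n] := DA_terminates; exists n; apply/eqP.
exists (Ys (ex_minn fixed)), (ex_minn fixed).
case: ex_minnP => n /eqP fix_n min_n; split => // j lt_jn /eqP/min_n.
by rewrite leqNgt lt_jn.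
Qed.

Lemma DA_outputs_choice_stable M : DA_outputs cD cH cW B tb P M -> choice_stable P M.
Proof.
case=> n [fix_n _ ->]; split.
- exact: Ch_D_matching.
- by move=> x /Ch_D_mem[].
- exact: esym fix_n.
- by move=> y yNY pref; apply/Rseq_rejected/preferred_in_Rseq.
Qed.

Lemma proposals_preferred mu k y : choice_stable P mu ->
  (forall x, x \in mu -> x \notin Rs k) -> y \in Ys k -> y \notin mu -> prefers P mu y.
Proof.
move=> _ muNR yY yNmu; have [_ acc_y best] := Ch_D_mem yY.
rewrite /prefers; case out: (outcome cD mu (cD y)) => [z|]; last exact: acc_y.
have [zmu zd] := outcome_some out.
rewrite ltn_neqAle best ?inE ?muNR // andbT.
by apply: contraNneq yNmu => /(strict_pref_Some erefl zd) ->.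
Qed.

Lemma choice_stable_notin_Rseq mu k x : choice_stable P mu -> x \in mu -> x \notin Rs k.
Proof.
move=> stab; elim: k x => [|k IH] x xmu; first by rewrite inE.
rewrite Rseq_succ in_setU negb_or IH //=; apply/setDP => -[xY xNZ].
have pref y : y \in Ys k -> y \notin mu -> prefers P mu y.
  exact: proposals_preferred stab IH.
have Ch_union := Ch_H_stable_union stab pref.
by case/negP: xNZ; apply: Ch_H_substitutes (subsetUr mu _) xY _; rewrite Ch_union.
Qed.

Lemma DA_doctor_optimal M mu x : DA_outputs cD cH cW B tb P M -> choice_stable P mu ->
  x \in mu -> (P (cD x) (outcome cD M (cD x)) <= P (cD x) (Some x))%N.
Proof.
case=> n [_ _ ->] stab xmu; have [_ acc _ _] := stab.
have xS : x \in ~: Rs n by rewrite inE (choice_stable_notin_Rseq _ stab xmu).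
have [m mY [md le_mx]] := Ch_D_best xS (acc x xmu).
by rewrite -md outcome_of_mem ?md //; apply: Ch_D_matching.
Qed.

Lemma DA_rural_doctors M mu d : DA_outputs cD cH cW B tb P M -> choice_stable P mu ->
  outcome cD mu d = None -> outcome cD M d = None.
Proof.
move=> DA_M stab out; have [match_mu acc _ _] := stab.
have [_ _ Ch_M _] := DA_outputs_choice_stable DA_M.
have pref y : y \in M -> y \notin mu -> prefers P mu y.
  case: DA_M => n [_ _ ->] yY; apply: (proposals_preferred stab _ yY) => x xmu.
  exact: choice_stable_notin_Rseq stab xmu.
have card_M : (#|M| <= #|mu|)%N.
  rewrite -{1}Ch_M -(Ch_H_stable_union stab pref).
  exact/card_Ch_H_mono/subsetUr.
have sub : cD @: mu \subset cD @: M.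
  apply/subsetP => _ /imsetP[x xmu ->]; have := DA_doctor_optimal DA_M stab xmu.
  case outx: (outcome cD M (cD x)) => [m|] le_x.
    by have [mM <-] := outcome_some outx; rewrite imset_f.
  by move: (acc x xmu); rewrite /acceptable ltnNge le_x.
have eq_doctors : cD @: mu = cD @: M.
  apply/eqP; rewrite eqEcard sub (card_in_imset (matching_inj match_mu)) /=.
  exact: leq_trans (leq_imset_card cD M) card_M.
by apply/eqP; rewrite outcome_none_imset -eq_doctors -outcome_none_imset out.
Qed.

End DeferredAcceptance.

(** * Strategy-proofness *)

(* d's ranking with x' first and the outside option second; pickle only makes
   it injective. *)
Definition top_rank (x' : C) (o : option C) : nat :=
  (if o is Some y then (if y == x' then 0 else (pickle y).+2) else 1)%N.

(* p with the outside option moved just below x'. *)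
Definition truncate_at (p : option C -> nat) (x' : C) (o : option C) : nat :=
  (if o is Some _ then (if p o <= p (Some x') then p o else (p o).+1)
   else (p (Some x')).+1)%N.

Lemma top_rank_strict d x' : strict_pref cD d (top_rank x').
Proof.
move=> [y1|] [y2|] _ _ //=; do ?case: eqP => //.
- by move=> -> ->.
- by move=> _ _ [] /(pcan_inj pickleK) ->.
Qed.

Lemma top_rank_eq0 x' o : top_rank x' o = 0%N -> o = Some x'.
Proof. by case: o => [y|] //=; case: eqP => [->|]. Qed.

Lemma truncate_at_strict d p x' : strict_pref cD d p -> strict_pref cD d (truncate_at p x').
Proof.
move=> p_strict [y1|] [y2|] in1 in2; have := p_strict _ _ in1 in2; rewrite /truncate_at //=.
- by case: ifP => h1; case: ifP => h2 inj eq12; apply: inj; lia.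
- by case: ifP => h1 inj eq12; apply: inj; lia.
- by case: ifP => h2 inj eq12; apply: inj; lia.
Qed.

Lemma truncate_at_acceptable p x' w :
  (truncate_at p x' (Some w) < truncate_at p x' None)%N -> (p (Some w) <= p (Some x'))%N.
Proof. by rewrite /truncate_at; case: ifP => // h; lia. Qed.

Lemma strict_pref_update P d q : (forall d0, strict_pref cD d0 (P d0)) ->
  strict_pref cD d q -> forall d0, strict_pref cD d0 (update P d q d0).
Proof. by move=> P_strict q_strict d0; rewrite /update; case: eqP => [->|]. Qed.

Lemma DA_outcome_acceptable P M d : DA_outputs cD cH cW B tb P M ->
  (P d (outcome cD M d) <= P d None)%N.
Proof.
case=> n [_ _ ->]; case out: (outcome _ _ d) => [m|//].
have [mY <-] := outcome_some out; have [_ acc _] := Ch_D_mem mY.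
exact: ltnW.
Qed.

Lemma choice_stable_top_rank P Q d x' mu : choice_stable Q mu ->
  outcome cD mu d = Some x' -> (forall d0, d0 != d -> Q d0 = P d0) ->
  choice_stable (update P d (top_rank x')) mu.
Proof.
move=> stab out agree; have [match_mu acc _ _] := stab.
apply: (choice_stable_transfer stab) => [x xmu | y yNmu].
  rewrite /acceptable /update; case: eqP => [xd | /eqP nxd]; last first.
    by rewrite -agree //; apply: acc.
  by have := outcome_of_mem match_mu xmu; rewrite xd out => -[->]; rewrite /= eqxx.
rewrite /prefers /update; case: eqP => [-> | /eqP nyd]; last by rewrite agree.
by rewrite out /= eqxx ltn0.
Qed.

Lemma choice_stable_truncate_matched P d x' w mu : (P d (Some x') < P d None)%N ->
  choice_stable (update P d (truncate_at (P d) x')) mu -> outcome cD mu d = Some w ->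
  (P d (Some w) <= P d (Some x'))%N /\ choice_stable P mu.
Proof.
move=> acc_x' stab out; have [match_mu acc _ _] := stab.
have [wmu wd] := outcome_some out.
have le_wx' : (P d (Some w) <= P d (Some x'))%N.
  by apply: truncate_at_acceptable; have := acc w wmu; rewrite /acceptable /update wd eqxx.
split=> //; apply: (choice_stable_transfer stab) => [x xmu | y yNmu].
  have := acc x xmu; rewrite /acceptable /update; case: eqP => [xd | //] _.
  have := outcome_of_mem match_mu xmu; rewrite xd out => -[<-].
  exact: leq_ltn_trans le_wx' acc_x'.
rewrite /prefers /update; case: eqP => [-> | //]; rewrite out /truncate_at le_wx'.
by move=> lt_yw; rewrite (leq_trans (ltnW lt_yw) le_wx').
Qed.

Lemma choice_stable_truncate_unmatched P d x' mu :
  choice_stable (update P d (truncate_at (P d) x')) mu -> outcome cD mu d = None ->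
  choice_stable (update P d (top_rank x')) mu.
Proof.
move=> stab out; have [_ acc _ _] := stab.
apply: (choice_stable_transfer stab) => [x xmu | y yNmu].
  have := acc x xmu; rewrite /acceptable /update; case: eqP => [xd | //] _.
  by have := outcome_none out xmu; rewrite xd eqxx.
rewrite /prefers /update; case: eqP => [-> | //]; rewrite out.
have [-> _ | nyx] := eqVneq y x'; first by rewrite /truncate_at leqnn.
by rewrite /top_rank (negbTE nyx).
Qed.

Lemma DA_strategy_proof P d p' M M' :
  (forall d0, strict_pref cD d0 (P d0)) -> strict_pref cD d p' ->
  DA_outputs cD cH cW B tb P M -> DA_outputs cD cH cW B tb (update P d p') M' ->
  (P d (outcome cD M d) <= P d (outcome cD M' d))%N.
Proof.
move=> P_strict p'_strict DA_M DA_M'; rewrite leqNgt; apply/negP => better.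
have acc_M := DA_outcome_acceptable d DA_M.
case out': (outcome cD M' d) better => [x'|] better; last by rewrite ltnNge acc_M in better.
have acc_x' := leq_trans better acc_M.
have top_strict := strict_pref_update P_strict (@top_rank_strict d x').
have trunc_strict := strict_pref_update P_strict (truncate_at_strict (x' := x') (P_strict d)).
have [Mtop DA_Mtop] := DA_outputs_exists (update P d (top_rank x')).
have out_top : outcome cD Mtop d = Some x'.
  have agree d0 : d0 != d -> update P d p' d0 = P d0 by rewrite /update => /negbTE ->.
  have stab' := choice_stable_top_rank
    (DA_outputs_choice_stable (strict_pref_update P_strict p'_strict) DA_M') out' agree.
  have [x'M' x'd] := outcome_some out'.
  have := DA_doctor_optimal top_strict DA_Mtop stab' x'M'.
  by rewrite x'd /update eqxx {2}/top_rank /= eqxx leqn0 => /eqP/top_rank_eq0.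
have [Mtr DA_Mtr] := DA_outputs_exists (update P d (truncate_at (P d) x')).
have stab_tr := DA_outputs_choice_stable trunc_strict DA_Mtr.
case out_tr: (outcome cD Mtr d) => [w|].
  have [le_wx' stabP] := choice_stable_truncate_matched acc_x' stab_tr out_tr.
  have [wM wd] := outcome_some out_tr.
  have := DA_doctor_optimal P_strict DA_M stabP wM; rewrite wd => le_Mw.
  by have := leq_ltn_trans (leq_trans le_Mw le_wx') better; rewrite ltnn.
have stab_top := choice_stable_truncate_unmatched stab_tr out_tr.
by rewrite (DA_rural_doctors top_strict DA_Mtop stab_top out_tr) in out_top.
Qed.

End BudgetedMarket.

Unset Implicit Arguments.
Set Strict Implicit.

Theorem theorem8
  (R : realFieldType) (D H C : finType)
  (cD : C -> D) (cH : C -> H) (cW : C -> R)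
  (B : H -> R) (f : H -> {set C} -> R) (gamma : H -> R) (tb : C -> nat)
  (* contracts are distinct triples (doctor, hospital, wage) *)
  (Hinj : forall x y, cD x = cD y -> cH x = cH y -> cW x = cW y -> x = y)
  (HB : forall h, 0 < B h)
  (Hwage : forall x, 0 < cW x /\ cW x <= B (cH x))
  (Hgamma : forall h, 0 < gamma h)
  (Hf : forall h (Y : {set C}), (forall x, x \in Y -> cH x = h) ->
          f h Y = gamma h * (#|Y|%:R))
  (Htb : injective tb) :
  (* DA terminates with a B_H-stable matching *)
  (forall P : D -> option C -> nat, (forall d, strict_pref cD d (P d)) ->
     exists M, DA_outputs cD cH cW B tb P M /\ stable cD cH cW B P f M)
  /\
  (* strategy-proofness for doctors *)
  (forall (P : D -> option C -> nat) (d : D) (p' : option C -> nat),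
     (forall d0, strict_pref cD d0 (P d0)) -> strict_pref cD d p' ->
     forall M M', DA_outputs cD cH cW B tb P M ->
       DA_outputs cD cH cW B tb (update P d p') M' ->
       (P d (outcome cD M d) <= P d (outcome cD M' d))%N).
Proof.
have cW_gt0 x : 0 < cW x by case: (Hwage x).
have B_ge0 h : 0 <= B h by apply: ltW.
split=> [P P_strict | P d p' P_strict p'_strict M M']; last exact: DA_strategy_proof.
have [M DA_M] := DA_outputs_exists cD cH cW_gt0 B_ge0 Htb P.
have stab_M := DA_outputs_choice_stable cW_gt0 B_ge0 Htb P_strict DA_M.
have stable_M := stable_of_choice_stable cW_gt0 B_ge0 Htb Hgamma Hf stab_M.
by exists M; split.
Qed.
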